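(* Let $K$ be a finite field, $G$ a finite group and $C$ a checkable right ideal of $KG$. Then there exists $u\in KG$ such that the dual module $C^*$ is isomorphic, as a right $KG$-module, to $KG/uKG$.
   Context: A right ideal $I\le KG$ is called checkable if there is $v\in KG$ with $I=\{a\in KG: va=0\}$. For a right $KG$-module $M$, the dual module $M^*=\operatorname{Hom}_K(M,K)$ is the right $KG$-module with $(\varphi g)(m)=\varphi(mg^{-1})$ for $\varphi\in M^*$, $g\in G$, $m\in M$. *)

From HB Require Import structures.
From mathcomp Require Import all_boot all_order all_algebra all_fingroup all_field.
Set Implicit Arguments. Unset Strict Implicit. Unset Printing Implicit Defensive.
Import GRing.Theory.
Local Open Scope ring_scope.

(* The group algebra KG of a finite group G (= the whole finGroupType gT)
   over a field K: elements are functions G -> K, a = \sum_g a(g) g. *)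
Notation grpalg K gT := {ffun gT -> K}.

Section GroupAlgebra.
Variables (K : fieldType) (gT : finGroupType).

Definition ga_mul (a b : grpalg K gT) : grpalg K gT :=
  [ffun g => \sum_(h : gT) a h * b (h^-1 * g)%g].

Definition ga_scale (k : K) (a : grpalg K gT) : grpalg K gT :=
  [ffun g => k * a g].

Definition ga_elt (g : gT) : grpalg K gT := [ffun h => (h == g)%:R].

Definition right_ideal (I : pred (grpalg K gT)) : Prop :=
  [/\ 0 \in I,
      (forall a b, a \in I -> b \in I -> a + b \in I) &
      (forall a b, a \in I -> ga_mul a b \in I)].

Definition checkable (I : pred (grpalg K gT)) : Prop :=
  right_ideal I /\ exists v : grpalg K gT, forall a, (a \in I) <-> ga_mul v a = 0.

(* K-linear functionals on the subspace C of KG, represented by functions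
   KG -> K whose restriction to C is K-linear (two such represent the same
   element of C^* = Hom_K(C,K) iff they agree on C). *)
Definition lin_on (C : pred (grpalg K gT)) (phi : grpalg K gT -> K) : Prop :=
  forall k x y, x \in C -> y \in C ->
    phi (ga_scale k x + y) = k * phi x + phi y.

Definition dual_act (phi : grpalg K gT -> K) (g : gT) : grpalg K gT -> K :=
  fun m => phi (ga_mul m (ga_elt g^-1)).

(* C^* is isomorphic, as a right KG-module, to KG/uKG:
   there is a map F : KG -> C^* which is K-linear and KG-linear
   (equivalently: linear and compatible with right multiplication by group
   elements), surjective onto C^*, and such that F a = F b in C^*
   iff a + uKG = b + uKG.  I.e. F induces a bijective module map
   KG/uKG -> C^*. *)
Definition dual_iso_cyclic_quotient (C : pred (grpalg K gT)) (u : grpalg K gT)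
  : Prop :=
  exists F : grpalg K gT -> (grpalg K gT -> K),
  [/\ forall a, lin_on C (F a),
      forall k a b x, x \in C -> F (ga_scale k a + b) x = k * F a x + F b x,
      forall a g x, x \in C -> F (ga_mul a (ga_elt g)) x = dual_act (F a) g x,
      forall phi, lin_on C phi -> exists a, forall x, x \in C -> F a x = phi x
    & forall a b, (forall x, x \in C -> F a x = F b x) <->
                  exists c, a - b = ga_mul u c].

End GroupAlgebra.

From HB Require Import structures.
From mathcomp Require Import all_boot all_order all_algebra all_fingroup all_field.
Set Implicit Arguments. Unset Strict Implicit. Unset Printing Implicit Defensive.
Import GRing.Theory.
Local Open Scope ring_scope.

(* Let C = { x : v x = 0 } and let
     <a, x> = \sum_g a(g) x(g)
   be the standard symmetric bilinear form on KG.  We show that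
   F : a |-> <a, .>|_C  is the required module map KG -> C^*, with
   u = v^ := \sum_g v(g) g^-1, so that C^* ~= KG / v^ KG.
   - Equivariance: <a g, x> = <a, x g^-1>, since g permutes the basis.
   - Linear algebra is done in coordinates: identifying KG with row vectors,
     left multiplication by v is the matrix Mx v, i.e. rv (v x) = rv x *m Mx v,
     and Mx v^ is the transpose of Mx v.  So C is the left kernel of Mx v.
   - Surjectivity: any linear form on C extends to KG, hence is some <a, .>
     (choose coordinates of a against a basis of C).
   - Kernel: <a, .> vanishes on C iff rv a lies in the double annihilator of
     the row space of (Mx v)^T, which is that row space itself; i.e. iff
     a \in v^ KG.
   The field K need not be finite for any of this. *)

Section Coordinates.
Variables (K : fieldType) (gT : finGroupType).
Local Notation n := #|gT|.
Local Notation KG := {ffun gT -> K}.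

Definition rv (a : KG) : 'rV[K]_n := \row_i a (enum_val i).
Definition vr (w : 'rV[K]_n) : KG := [ffun g => w 0 (enum_rank g)].

Lemma rvK : cancel rv vr.
Proof. by move=> a; apply/ffunP=> g; rewrite ffunE mxE enum_rankK. Qed.

Lemma vrK : cancel vr rv.
Proof. by move=> w; apply/rowP=> i; rewrite mxE ffunE enum_valK. Qed.

Lemma vr_lin (c : K) (w w' : 'rV[K]_n) :
  vr (c *: w + w') = ga_scale c (vr w) + vr w'.
Proof. by apply/ffunP=> g; rewrite !ffunE !mxE. Qed.

Lemma sum_enum (F : gT -> K) : \sum_(g : gT) F g = \sum_(i < n) F (enum_val i).
Proof. by rewrite (reindex _ (onW_bij _ (@enum_val_bij gT))). Qed.

Definition Mx (v : KG) : 'M[K]_n :=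
  \matrix_(i, j) v (enum_val j * (enum_val i)^-1)%g.

Lemma rv_mul (v x : KG) : rv (ga_mul v x) = rv x *m Mx v.
Proof.
apply/rowP=> j; rewrite !mxE ffunE.
rewrite (reindex_inj (inj_comp (mulgI (enum_val j)) invg_inj)) /= sum_enum.
by apply: eq_bigr => i _; rewrite !mxE invMg invgK mulgKV mulrC.
Qed.

Definition antipode (v : KG) : KG := [ffun g => v g^-1%g].

Lemma Mx_antipode (v : KG) : Mx (antipode v) = (Mx v)^T.
Proof. by apply/matrixP=> i j; rewrite !mxE ffunE invMg invgK. Qed.

Lemma ga_mul_elt (a : KG) (g : gT) :
  ga_mul a (ga_elt K g) = [ffun h => a (h * g^-1)%g].
Proof.
apply/ffunP=> h; rewrite !ffunE (bigD1 (h * g^-1)%g) //= big1.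
  by rewrite !ffunE invMg invgK mulgKV eqxx mulr1 addr0.
move=> k nk; rewrite ffunE; case: eqP => [e|]; last by rewrite mulr0.
by case/eqP: nk; rewrite -e invMg invgK mulKVg.
Qed.

Definition dot (a x : KG) : K := \sum_(g : gT) a g * x g.

Lemma dot_mx (a x : KG) : dot a x = (rv a *m (rv x)^T) 0 0.
Proof. by rewrite /dot sum_enum !mxE; apply: eq_bigr => i _; rewrite !mxE. Qed.

Lemma dot_linl (k : K) (a b x : KG) :
  dot (ga_scale k a + b) x = k * dot a x + dot b x.
Proof.
rewrite /dot big_distrr -big_split; apply: eq_bigr => g _.
by rewrite !ffunE mulrDl -mulrA.
Qed.

Lemma dot_linr (k : K) (a x y : KG) :
  dot a (ga_scale k x + y) = k * dot a x + dot a y.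
Proof.
rewrite /dot big_distrr -big_split; apply: eq_bigr => g _.
by rewrite !ffunE mulrDr mulrCA.
Qed.

Lemma dotBl (a b x : KG) : dot (a - b) x = dot a x - dot b x.
Proof. by rewrite /dot -sumrB; apply: eq_bigr => g _; rewrite !ffunE mulrBl. Qed.

Lemma dot_elt (a x : KG) (g : gT) :
  dot (ga_mul a (ga_elt K g)) x = dot a (ga_mul x (ga_elt K g^-1)).
Proof.
rewrite !ga_mul_elt /dot (reindex_inj (mulIg g)) /=.
by apply: eq_bigr => h _; rewrite !ffunE mulgK invgK.
Qed.

End Coordinates.

Lemma kermx_kermx_tr (K : fieldType) m p (A : 'M[K]_(m, p)) :
  (kermx (kermx A)^T <= A^T)%MS.
Proof.
have sub : (A^T <= kermx (kermx A)^T)%MS.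
  by apply/sub_kermxP; rewrite -trmx_mul mulmx_ker trmx0.
rewrite -(mxrank_leqif_sup sub).
by rewrite mxrank_ker !mxrank_tr mxrank_ker subKn ?rank_leq_row.
Qed.

Lemma lin_on_sum (K : fieldType) (gT : finGroupType) m
    (S : 'M[K]_(m, #|gT|)) (P : pred {ffun gT -> K}) (phi : {ffun gT -> K} -> K) :
  lin_on P phi -> (forall w, (w <= S)%MS -> vr w \in P) ->
  forall (I : Type) (s : seq I) (c : I -> K) (w : I -> 'rV[K]_#|gT|),
  (forall i, (w i <= S)%MS) ->
  phi (vr (\sum_(i <- s) c i *: w i)) = \sum_(i <- s) c i * phi (vr (w i)).
Proof.
move=> linP SP I s c w wS; elim: s => [|i s IHs]; last first.
  rewrite !big_cons vr_lin linP ?IHs ?SP //.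
  by apply: summx_sub => j _; apply: scalemx_sub.
have P0 : vr 0 \in P by apply: SP; apply: sub0mx.
have phi00 : phi (vr 0) = phi (vr 0) + phi (vr 0).
  have := linP 1 _ _ P0 P0; rewrite mul1r => <-; congr phi.
  by apply/ffunP=> g; rewrite !ffunE !mxE mul1r addr0.
by rewrite !big_nil; apply: (addrI (phi (vr 0))); rewrite addr0 -phi00.
Qed.

Section CheckableIdeal.
Variables (K : fieldType) (gT : finGroupType).
Local Notation KG := {ffun gT -> K}.
Variables (v : KG) (C : pred KG).
Hypothesis memC : forall x, x \in C <-> ga_mul v x = 0.

Lemma memC_mx (x : KG) : x \in C <-> (rv x <= kermx (Mx v))%MS.
Proof.
split=> [/memC vx0|/sub_kermxP vx0].
  by apply/sub_kermxP; rewrite -rv_mul vx0; apply/rowP=> i; rewrite !mxE ffunE.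
apply/memC/(can_inj (@rvK _ _)); rewrite rv_mul vx0.
by apply/rowP=> i; rewrite !mxE ffunE.
Qed.

Lemma vr_memC (w : 'rV[K]_#|gT|) : (w <= kermx (Mx v))%MS -> vr w \in C.
Proof. by move=> wC; apply/memC_mx; rewrite vrK. Qed.

Lemma dot_onto (phi : KG -> K) :
  lin_on C phi -> exists a, forall x, x \in C -> dot a x = phi x.
Proof.
(* a is chosen so that <a, .> takes the values y of phi on a basis B of C. *)
move=> linC; pose B := row_base (kermx (Mx v)).
pose y := \row_i phi (vr (row i B)).
have fullBt : row_full B^T by rewrite /row_full mxrank_tr; apply: row_base_free.
exists (vr (y *m pinvmx B^T)) => x xC.
have : (rv x <= B)%MS by rewrite eq_row_base; apply/memC_mx.
case/submxP=> c rvx; rewrite dot_mx vrK rvx (trmx_mul c B) (mulmxA (y *m pinvmx B^T)).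
rewrite (mulmxKpV (submx_full y fullBt)) -(rvK x) rvx (mulmx_sum_row c B).
rewrite (lin_on_sum (S := B) linC) => [|w|i]; last exact: row_sub.
- by rewrite mxE; apply: eq_bigr => i _; rewrite !mxE mulrC.
- by rewrite eq_row_base; apply: vr_memC.
Qed.

Lemma dot_kernel (a b : KG) :
  (forall x, x \in C -> dot a x = dot b x) <->
  exists c, a - b = ga_mul (antipode v) c.
Proof.
split=> [dot_ab | [c abc] x /memC_mx/sub_kermxP vx0].
  have : (rv (a - b) <= (Mx v)^T)%MS.
    apply: submx_trans (kermx_kermx_tr _); apply/sub_kermxP/rowP=> i.
    have rowC : vr (row i (kermx (Mx v))) \in C.
      by apply: vr_memC; apply: row_sub.
    move/eqP: (dot_ab _ rowC); rewrite -subr_eq0 -dotBl dot_mx vrK => /eqP dot0.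
    by rewrite [RHS]mxE -dot0 !mxE; apply: eq_bigr => j _; rewrite !mxE.
  case/submxP=> D rvD; exists (vr D).
  by apply: (can_inj (@rvK _ _)); rewrite rv_mul vrK Mx_antipode rvD.
apply/eqP; rewrite -subr_eq0 -dotBl abc dot_mx rv_mul Mx_antipode.
by rewrite -mulmxA -trmx_mul vx0 trmx0 mulmx0 mxE.
Qed.

End CheckableIdeal.

Theorem mainTheorem5 (K : finFieldType) (gT : finGroupType)
  (C : {set {ffun gT -> K}}) :
  checkable (mem C) ->
  exists u : {ffun gT -> K}, dual_iso_cyclic_quotient (mem C) u.
Proof.
move=> [_ [v memC]]; exists (antipode v), (@dot _ _); split.
- by move=> a k x y _ _; apply: dot_linr.
- by move=> k a b x _; apply: dot_linl.
- by move=> a g x _; apply: dot_elt.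
- exact: dot_onto memC.
- exact: dot_kernel memC.
Qed.
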